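(* Let $\alpha\ge1$. If all valuation functions are symmetric submodular and every item cost function is non-decreasing and $\alpha$-average-decreasing, then for every (truthfully reported) valuation profile the allocation $A$ output by IACSM satisfies $\pi(A)\le 2\alpha^3H_n\cdot\pi(A^* )$, where $A^*$ is an allocation minimizing the social cost $\pi$.
   Context: Players $N=\{1,\dots,n\}$, items $M=\{1,\dots,m\}$, non-decreasing valuations $v_i:2^M\to\mathbb{R}_{\ge0}$; symmetric: $f(S)=f(T)$ whenever $|S|=|T|$; submodular: $f(S\cup\{x\})-f(S)\ge f(T\cup\{x\})-f(T)$ for $S\subseteq T$, $x\notin T$. Item cost functions $c_j:2^N\to\mathbb{R}_{\ge0}$; $c$ is $\alpha$-average-decreasing if $\alpha\frac{c(S)}{|S|}\ge\frac{c(T)}{|T|}$ for all nonempty $S\subseteq T\subseteq N$. For an allocation $A=(A_1,\dots,A_n)$, $T_j=\{i:j\in A_i\}$ and the social cost is $\pi(A)=\sum_{j\in M}c_j(T_j)+\sum_{i\in N}(v_i(M)-v_i(A_i))$. $H_n=\sum_{k=1}^n1/k$. Mechanism IACSM (input: declared valuations $b$): maintain active set $X=N$, sets $T_j=N$ and cost shares $\chi_j=c_j(N)/n$ for all items $j$. While $X\neq\emptyset$: (1) every $i\in X$ computes $A_i\in\arg\max_{S\subseteq M}\{b_i(S)-\sum_{j\in S}\chi_j\}$, choosing among maximizers one of maximum cardinality $k$, and among those the $k$ items with smallest current $\chi_j$ (item ties by index); (2) choose $i^*\in X$ with $|A_{i^*}|$ minimum (ties by smallest index); (3) assign $A_{i^*}$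 to $i^*$ permanently and remove $i^*$ from $X$; (4) for every item $j\notin A_{i^*}$ set $T_j:=T_j\setminus\{i^*\}$ and, if $T_j\ne\emptyset$, set $\chi_j:=\max\{\chi_j,c_j(T_j)/|T_j|\}$. Output the assigned bundles and payments $p_i=\sum_{j\in A_i}\chi_j$ with final cost shares. *)

From HB Require Import structures.
From mathcomp Require Import all_boot all_order all_algebra.
Set Implicit Arguments. Unset Strict Implicit. Unset Printing Implicit Defensive.
Import Order.TTheory GRing.Theory Num.Theory.
Local Open Scope ring_scope.

Section IACSM.
Variables (R : realFieldType) (n m : nat).

Definition setfun_nondecreasing {T : finType} (f : {set T} -> R) : Prop :=
  forall S U : {set T}, S \subset U -> f S <= f U.

Definition setfun_symmetric {T : finType} (f : {set T} -> R) : Prop :=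
  forall S U : {set T}, #|S| = #|U| -> f S = f U.

Definition setfun_submodular {T : finType} (f : {set T} -> R) : Prop :=
  forall (S U : {set T}) (x : T), S \subset U -> x \notin U ->
    f (x |: S) - f S >= f (x |: U) - f U.

Definition avg_decreasing (alpha : R) (c : {set 'I_n} -> R) : Prop :=
  forall S U : {set 'I_n}, S != set0 -> S \subset U ->
    alpha * (c S / #|S|%:R) >= c U / #|U|%:R.

(* an allocation gives every player a bundle; items may be shared *)
Definition players_of (A : 'I_n -> {set 'I_m}) (j : 'I_m) : {set 'I_n} :=
  [set i | j \in A i].

Definition social_cost (v : 'I_n -> {set 'I_m} -> R) (c : 'I_m -> {set 'I_n} -> R)
  (A : 'I_n -> {set 'I_m}) : R :=
  \sum_(j < m) c j (players_of A j) + \sum_(i < n) (v i setT - v i (A i)).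

Definition harmonic (k : nat) : R := \sum_(l < k) (l.+1%:R)^-1.

Record state := State {
  st_X : {set 'I_n};                 (* active players *)
  st_T : 'I_m -> {set 'I_n};
  st_chi : 'I_m -> R;                (* current cost shares *)
  st_alloc : 'I_n -> {set 'I_m}      (* permanently assigned bundles *)
}.

Definition utility (b : {set 'I_m} -> R) (chi : 'I_m -> R) (S : {set 'I_m}) : R :=
  b S - \sum_(j in S) chi j.

Definition best_card (b : {set 'I_m} -> R) (chi : 'I_m -> R) : nat :=
  \max_(S : {set 'I_m} | [forall U : {set 'I_m}, utility b chi U <= utility b chi S])
     #|S|.

Definition item_prec (chi : 'I_m -> R) (j j' : 'I_m) : bool :=
  (chi j < chi j') || ((chi j == chi j') && (j < j')%N).

Definition cheapest (chi : 'I_m -> R) (k : nat) : {set 'I_m} :=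
  [set j | #|[set j' | item_prec chi j' j]| < k]%N.

Definition demand (b : {set 'I_m} -> R) (chi : 'I_m -> R) : {set 'I_m} :=
  cheapest chi (best_card b chi).

Definition iacsm_step (b : 'I_n -> {set 'I_m} -> R) (c : 'I_m -> {set 'I_n} -> R)
  (s : state) : state :=
  let D := fun i => demand (b i) (st_chi s) in
  match [pick i in st_X s | [forall i' in st_X s,
            (#|D i| < #|D i'|)%N || ((#|D i| == #|D i'|) && (i <= i')%N)]] with
  | None => s
  | Some i =>
      let T' := fun j => if j \in D i then st_T s j else st_T s j :\ i in
      State (st_X s :\ i) T'
        (fun j => if (j \notin D i) && (T' j != set0)
                  then Num.max (st_chi s j) (c j (T' j) / #|T' j|%:R)
                  else st_chi s j)
        (fun k => if k == i then D i else st_alloc s k)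
  end.

Definition iacsm_init (c : 'I_m -> {set 'I_n} -> R) : state :=
  State setT (fun _ => setT) (fun j => c j setT / n%:R) (fun _ => set0).

(* each step removes one active player; n steps empty X *)
Definition iacsm_alloc (b : 'I_n -> {set 'I_m} -> R) (c : 'I_m -> {set 'I_n} -> R)
  : 'I_n -> {set 'I_m} :=
  st_alloc (iter n (iacsm_step b c) (iacsm_init c)).

End IACSM.

(* Symmetry and submodularity make demands monotone: raising the shares of other items
   never drops an item from a demand.  So a bundle, once assigned, stays inside every
   later demand, its shares never change again, and in the end the payments cover the
   cost of every item.  Compare with any allocation B, and let P_j be the owners of j
   in B.  When player i leaves, its valuation loss plus payment is at most that of B_i
   at the current shares, and a share on an item j of B_i is at most
   alpha c_j(P_j) / q with q the number of owners of j still active; over all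
   departures these charges telescope to alpha H_|P_j| c_j(P_j).  Hence
   pi(A) <= alpha H_n pi(B) <= 2 alpha^3 H_n pi(B). *)

From HB Require Import structures.
From mathcomp Require Import all_boot all_order all_algebra.
From mathcomp Require Import ring lra zify.
Import Order.TTheory GRing.Theory Num.Theory.
Local Open Scope ring_scope.
Set Implicit Arguments. Unset Strict Implicit. Unset Printing Implicit Defensive.

Lemma card_set_ord_leq m (S : {set 'I_m}) : (#|S| <= m)%N.
Proof. by rewrite -[m in (_ <= m)%N]card_ord max_card. Qed.

Lemma card_ord_ltn m k : (k <= m)%N -> #|[set r : 'I_m | (r < k)%N]| = k.
Proof.
move=> km; have widen_inj : injective (widen_ord km) by move=> x y /(congr1 val) /= /val_inj.
rewrite -[RHS](card_ord k) -(card_imset _ widen_inj).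
congr #|pred_of_set _|; apply/setP => r; rewrite inE; apply/idP/imsetP.
  by move=> rk; exists (Ordinal rk) => //; apply: val_inj.
by case=> r' _ ->; rewrite /= ltn_ord.
Qed.

Lemma ler_sum_eqcard (R : numDomainType) (T : finType) (f : T -> R) (A B : {set T}) :
  #|A| = #|B| -> (forall x y, x \in A -> y \in B -> f x <= f y) ->
  \sum_(x in A) f x <= \sum_(x in B) f x.
Proof.
move eq_k : #|A| => k; elim: k A B eq_k => [|k IHk] A B cardA cardB leAB.
  by move: cardA cardB => /eqP; rewrite cards_eq0 => /eqP-> /esym/eqP; rewrite cards_eq0 => /eqP->.
have [a Aa] : exists a, a \in A by apply/card_gt0P; rewrite cardA.
have [b Bb] : exists b, b \in B by apply/card_gt0P; rewrite -cardB.
rewrite (big_setD1 a Aa) (big_setD1 b Bb) /= lerD ?leAB //.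
apply: IHk => [||x y /setD1P[_ Ax] /setD1P[_ By]]; last exact: leAB.
- by move: cardA; rewrite (cardsD1 a) Aa => -[].
- by move: cardB; rewrite (cardsD1 b) Bb => -[].
Qed.

Lemma harmonic0 (R : realFieldType) : harmonic R 0 = 0.
Proof. by rewrite /harmonic big_ord0. Qed.

Lemma harmonicS (R : realFieldType) k : harmonic R k.+1 = harmonic R k + k.+1%:R^-1.
Proof. by rewrite /harmonic big_ord_recr. Qed.

Lemma harmonic_le (R : realFieldType) k l : (k <= l)%N -> harmonic R k <= harmonic R l.
Proof.
move=> /subnK <-; elim: (l - k)%N => [|d IHd]; first by rewrite add0n.
by rewrite addSn harmonicS (le_trans IHd) // lerDl invr_ge0.
Qed.

Lemma harmonic_ge0 (R : realFieldType) k : 0 <= harmonic R k.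
Proof. by rewrite -(harmonic0 R) harmonic_le. Qed.

Lemma sum_payments_by_item (R : realFieldType) n m (A : 'I_n -> {set 'I_m}) (f : 'I_m -> R) :
  \sum_(i < n) \sum_(j in A i) f j = \sum_(j < m) #|players_of A j|%:R * f j.
Proof.
rewrite (exchange_big_dep predT) //=; apply: eq_bigr => j _.
rewrite (eq_bigl (mem (players_of A j))) ?sumr_const ?mulr_natl //.
by move=> i; rewrite /= !inE.
Qed.

Lemma sum_notin_setD1 (V : nmodType) n (X : {set 'I_n}) i (F : 'I_n -> V) :
  i \in X -> \sum_(k | k \notin X :\ i) F k = F i + \sum_(k | k \notin X) F k.
Proof.
move=> iX; rewrite (bigD1 i) ?setD11 //=; congr (_ + _); apply: eq_bigl => k.
by rewrite in_setD1 negb_and negbK; case: eqVneq => [->|_]; rewrite ?iX ?andbT.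
Qed.

Lemma exists_lexmin n (X : {set 'I_n}) (f : 'I_n -> nat) : X != set0 ->
  exists2 i, i \in X &
    [forall i' in X, (f i < f i')%N || ((f i == f i') && (i <= i')%N)].
Proof.
(* [f i * n + i] orders [X] lexicographically by [(f i, i)]. *)
case/set0Pn=> i0 i0X; have [i iX i_min] := arg_minnP (fun i => f i * n + i)%N i0X.
exists i => //; apply/forall_inP => i' i'X; have := i_min i' i'X.
have := ltn_ord i; have := ltn_ord i'; case: (ltngtP (f i) (f i')) => [//|lt_f|->]; last by lia.
have : ((f i').+1 * n <= f i * n)%N by rewrite leq_mul2r lt_f orbT.
rewrite mulSn; lia.
Qed.

Section ItemOrder.
Variables (R : realFieldType) (m : nat) (chi : 'I_m -> R).

Lemma item_prec_irr j : ~~ item_prec chi j j.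
Proof. by rewrite /item_prec ltxx eqxx ltnn. Qed.

Lemma item_prec_trans j1 j2 j3 :
  item_prec chi j1 j2 -> item_prec chi j2 j3 -> item_prec chi j1 j3.
Proof.
rewrite /item_prec => /orP[lt12|/andP[/eqP-> lt12]] /orP[lt23|/andP[/eqP<- lt23]].
- by rewrite (lt_trans lt12 lt23).
- by rewrite lt12.
- by rewrite lt23.
- by rewrite eqxx (ltn_trans lt12 lt23) orbT.
Qed.

Lemma item_prec_total j1 j2 : j1 != j2 -> item_prec chi j1 j2 || item_prec chi j2 j1.
Proof.
rewrite /item_prec => neq; case: ltgtP => //= _.
by case: ltngtP => // /val_inj eq12; rewrite eq12 eqxx in neq.
Qed.

Lemma item_prec_le j1 j2 : item_prec chi j1 j2 -> chi j1 <= chi j2.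
Proof. by case/orP=> [/ltW|/andP[/eqP-> _]]. Qed.

Definition rank j := #|[set j' | item_prec chi j' j]|.

Lemma rank_lt j1 j2 : item_prec chi j1 j2 -> (rank j1 < rank j2)%N.
Proof.
move=> prec12; apply/proper_card/properP; split.
  by apply/subsetP => j; rewrite !inE => /item_prec_trans; apply.
by exists j1; rewrite !inE ?prec12 ?item_prec_irr.
Qed.

Lemma rank_inj : injective rank.
Proof.
move=> j1 j2 eq_rank; apply/eqP/negPn/negP => /item_prec_total.
by case/orP=> /rank_lt; rewrite eq_rank ltnn.
Qed.

Lemma rank_ltn j : (rank j < m)%N.
Proof.
have sub : [set j' | item_prec chi j' j] \subset [set~ j].
  by apply/subsetP => j'; rewrite !inE; apply: contraTneq => ->; apply: item_prec_irr.
apply: leq_ltn_trans (subset_leq_card sub) _.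
by rewrite cardsC1 card_ord prednK // (leq_ltn_trans _ (ltn_ord j)).
Qed.

Lemma share_le_of_rank j1 j2 : (rank j1 <= rank j2)%N -> chi j1 <= chi j2.
Proof.
rewrite leq_eqVlt => /orP[/eqP/rank_inj-> //|lt12].
have [eq12|/item_prec_total] := eqVneq j1 j2; first by rewrite eq12.
by case/orP=> [/item_prec_le //|/rank_lt]; rewrite ltnNge ltnW.
Qed.

Lemma mem_cheapest j k : (j \in cheapest chi k) = (rank j < k)%N.
Proof. by rewrite inE. Qed.

Lemma cheapest_subset k k' : (k <= k')%N -> cheapest chi k \subset cheapest chi k'.
Proof. by move=> le_k; apply/subsetP => j; rewrite !mem_cheapest => /leq_trans; apply. Qed.

Lemma card_cheapest k : (k <= m)%N -> #|cheapest chi k| = k.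
Proof.
move=> km; pose rk j : 'I_m := Ordinal (rank_ltn j).
have rk_inj : injective rk by move=> j1 j2 /(congr1 val) /rank_inj.
have -> : cheapest chi k = rk @^-1: [set r : 'I_m | (r < k)%N].
  by apply/setP => j; rewrite !inE.
by rewrite card_preimset // card_ord_ltn.
Qed.

Lemma cheapest_subset_card k k' :
  (#|cheapest chi k| <= #|cheapest chi k'|)%N -> cheapest chi k \subset cheapest chi k'.
Proof.
move=> le_card; have [/cheapest_subset //|/ltnW/cheapest_subset sub] := leqP k k'.
by have /eqP-> : cheapest chi k' == cheapest chi k by rewrite eqEcard sub le_card.
Qed.

Lemma sum_cheapest_le k (S : {set 'I_m}) :
  #|S| = #|cheapest chi k| -> \sum_(j in cheapest chi k) chi j <= \sum_(j in S) chi j.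
Proof.
set C := cheapest chi k => cardS.
rewrite (big_setID S) [leRHS](big_setID C) /= setIC lerD //.
apply: ler_sum_eqcard => [|j1 j2]; first by rewrite !cardsD cardS setIC.
rewrite !inE -leqNgt => /andP[_ j1C] /andP[j2C _].
by apply/share_le_of_rank/ltnW; exact: leq_trans j1C j2C.
Qed.

End ItemOrder.

Lemma rank_raise_le (R : realFieldType) m (chi chi' : 'I_m -> R) j :
  (forall x, chi x <= chi' x) -> chi' j = chi j -> (rank chi' j <= rank chi j)%N.
Proof.
move=> le_chi eq_j; apply/subset_leq_card/subsetP => x; rewrite !inE /item_prec eq_j.
case/orP=> [lt_x|/andP[/eqP eq_x lt_idx]]; first by rewrite (le_lt_trans (le_chi x) lt_x).
by move: (le_chi x); rewrite eq_x le_eqVlt => /orP[/eqP->|->]; rewrite ?eqxx ?lt_idx ?orbT.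
Qed.

(* By symmetry, [b S = value_of_card b #|S|] (lemma [value_of_cardE]). *)
Definition value_of_card (R : realFieldType) m (b : {set 'I_m} -> R) k :=
  b [set j : 'I_m | (j < k)%N].

Section Demand.
Variables (R : realFieldType) (m : nat) (b : {set 'I_m} -> R).
Hypothesis b_sym : setfun_symmetric b.

Let maximizer chi S := forall U, utility b chi U <= utility b chi S.

Lemma best_card_spec chi : exists2 S, maximizer chi S & #|S| = best_card b chi.
Proof.
have [S0 _ S0max] := @arg_maxP _ R _ set0 predT (utility b chi) isT.
have : (0 < #|[pred S | [forall U, (utility b chi U <= utility b chi S)%R]]|)%N.
  by apply/card_gt0P; exists S0; rewrite inE; apply/forallP => U; apply: S0max.
by case/(eq_bigmax_cond (fun S : {set 'I_m} => #|S|)) => S; rewrite inE => /forallP; exists S.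
Qed.

Lemma leq_best_card chi S : maximizer chi S -> (#|S| <= best_card b chi)%N.
Proof.
move=> Smax; apply: (@leq_bigmax_cond _
  (fun S => [forall U, (utility b chi U <= utility b chi S)%R]) (fun S => #|S|)).
exact/forallP.
Qed.

Lemma best_card_leq chi : (best_card b chi <= m)%N.
Proof. by have [S _ <-] := best_card_spec chi; apply: card_set_ord_leq. Qed.

Lemma card_demand chi : #|demand b chi| = best_card b chi.
Proof. exact/card_cheapest/best_card_leq. Qed.

Lemma demand_max chi U : utility b chi U <= utility b chi (demand b chi).
Proof.
have [S Smax cardS] := best_card_spec chi; apply: le_trans (Smax U) _.
have cardD : #|S| = #|demand b chi| by rewrite card_demand.
by rewrite /utility (b_sym cardD) lerB // sum_cheapest_le.
Qed.

Lemma value_of_cardE S : b S = value_of_card b #|S|.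
Proof. by apply: b_sym; rewrite card_ord_ltn // card_set_ord_leq. Qed.

Hypothesis b_sub : setfun_submodular b.

Local Notation g := (value_of_card b).

Lemma value_of_card_concave k k' : (k <= k')%N -> (k' < m)%N ->
  g k'.+1 - g k' <= g k.+1 - g k.
Proof.
move=> le_k lt_k'm; pose x : 'I_m := Ordinal lt_k'm.
have sub : [set j : 'I_m | (j < k)%N] \subset [set j : 'I_m | (j < k')%N].
  by apply/subsetP => j; rewrite !inE => /leq_trans; apply.
have xk' : x \notin [set j : 'I_m | (j < k')%N] by rewrite inE ltnn.
have xk : x \notin [set j : 'I_m | (j < k)%N] by rewrite inE -leqNgt.
have := b_sub sub xk'; rewrite !value_of_cardE !cardsU1 (negbTE xk) (negbTE xk') /=.
by rewrite !card_ord_ltn // ?(leq_trans le_k) // ltnW.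
Qed.

Lemma marginal_sum_ge d k k' : (0 < d <= m)%N -> (k <= k' <= d)%N ->
  (k' - k)%:R * (g d - g d.-1) <= g k' - g k.
Proof.
case/andP=> d_gt0 dm /andP[le_k]; rewrite -(subnKC le_k).
elim: (k' - k)%N => [|l IHl] le_d; first by rewrite addn0 subnn mul0r subrr.
rewrite addnS in le_d *; rewrite subSn ?leq_addr // addKn -addn1 natrD mulrDl mul1r.
have marginal : g d - g d.-1 <= g (k + l).+1 - g (k + l).
  have := @value_of_card_concave (k + l) d.-1; rewrite prednK //; apply => //.
  by rewrite -ltnS prednK.
have := IHl (ltnW le_d); rewrite addKn; lra.
Qed.

Lemma demand_share_le_marginal chi j : j \in demand b chi ->
  chi j <= g (best_card b chi) - g (best_card b chi).-1.
Proof.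
move=> jD; have cardDj : #|demand b chi :\ j| = (best_card b chi).-1.
  by rewrite -card_demand (cardsD1 j (demand b chi)) jD.
have := demand_max chi (demand b chi :\ j).
by rewrite /utility (big_setD1 j jD) /= !value_of_cardE cardDj card_demand; lra.
Qed.

(* If [j] left the demand, the [r.+1] cheapest items under [chi'] ([r] the new rank
   of [j]) would still maximize utility: each item added to the new demand costs at
   most [chi j], which is below the marginal value at the old demand size. *)
Lemma mem_demand_raise chi chi' j : j \in demand b chi ->
  (forall x, chi x <= chi' x) -> chi' j = chi j -> j \in demand b chi'.
Proof.
move=> jD le_chi eq_j; have := jD; rewrite !mem_cheapest => rank_j.
set k := best_card b chi in rank_j; set k' := best_card b chi'.
have rank_j' := leq_ltn_trans (rank_raise_le le_chi eq_j) rank_j.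
set r := rank chi' j in rank_j'; rewrite ltnNge; apply/negP => le_k'r.
have rm : (r.+1 <= m)%N := rank_ltn chi' j.
have km : (k <= m)%N := best_card_leq chi.
set C := cheapest chi' k'; set E := cheapest chi' r.+1.
have cardC : #|C| = k' by rewrite card_cheapest // best_card_leq.
have cardE : #|E| = r.+1 by rewrite card_cheapest.
have CE : C \subset E by apply/cheapest_subset/ltnW.
have cardEC : #|E :\: C| = (r.+1 - k')%N by rewrite cardsD (setIidPr CE) cardE cardC.
have shares_EC : \sum_(x in E :\: C) chi' x <= (r.+1 - k')%:R * chi j.
  rewrite -cardEC mulr_natl -sumr_const ler_sum // => x; rewrite !inE ltnS.
  by case/andP=> _; rewrite -eq_j; apply: share_le_of_rank.
have values_EC : (r.+1 - k')%:R * (g k - g k.-1) <= g r.+1 - g k'.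
  apply: marginal_sum_ge; first by rewrite km (leq_ltn_trans _ rank_j).
  by rewrite ltnW.
have marginal_j : (r.+1 - k')%:R * chi j <= (r.+1 - k')%:R * (g k - g k.-1).
  by rewrite ler_wpM2l // demand_share_le_marginal.
have Emax : maximizer chi' E.
  move=> U; apply: le_trans (demand_max chi' U) _.
  rewrite /utility [X in _ <= _ - X](big_setID C) /= (setIidPr CE).
  rewrite !value_of_cardE cardC cardE -/C; lra.
by have := leq_best_card Emax; rewrite cardE leqNgt ltnS le_k'r.
Qed.

End Demand.

Section Assign.
Variables (R : realFieldType) (n m : nat).
Variables (b : 'I_n -> {set 'I_m} -> R) (c : 'I_m -> {set 'I_n} -> R).

(* The round of [iacsm_step] that serves player [i]. *)
Definition assign (s : state R n m) i : state R n m :=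
  let D := demand (b i) (st_chi s) in
  let T' j := if j \in D then st_T s j else st_T s j :\ i in
  State (st_X s :\ i) T'
    (fun j => if (j \notin D) && (T' j != set0)
              then Num.max (st_chi s j) (c j (T' j) / #|T' j|%:R)
              else st_chi s j)
    (fun k => if k == i then D else st_alloc s k).

Lemma iacsm_step_assign s : st_X s != set0 ->
  exists2 i, i \in st_X s &
    (forall i', i' \in st_X s -> demand (b i) (st_chi s) \subset demand (b i') (st_chi s))
    /\ iacsm_step b c s = assign s i.
Proof.
move=> X0; rewrite /iacsm_step; case: pickP => [i /andP[iX /forall_inP i_min]|none].
  exists i => //; split=> // i' /i_min le_i; apply: cheapest_subset_card.
  by case/orP: le_i => [/ltnW|/andP[/eqP-> _]].
have [i iX i_min] := exists_lexmin (fun i => #|demand (b i) (st_chi s)|) X0.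
by have := none i; rewrite iX i_min.
Qed.

End Assign.

Section Invariant.
Variables (R : realFieldType) (n m : nat).
Variables (v : 'I_n -> {set 'I_m} -> R) (c : 'I_m -> {set 'I_n} -> R) (alpha : R).
Variable B : 'I_n -> {set 'I_m}.
Hypothesis alpha_ge0 : 0 <= alpha.
Hypothesis v_sym : forall i, setfun_symmetric (v i).
Hypothesis v_sub : forall i, setfun_submodular (v i).
Hypothesis c_mono : forall j, setfun_nondecreasing (c j).
Hypothesis c_avg : forall j, avg_decreasing alpha (c j).

Local Notation P := (players_of B).

Definition served_cost (s : state R n m) :=
  \sum_(i | i \notin st_X s)
     (v i setT - v i (st_alloc s i) + \sum_(j in st_alloc s i) st_chi s j).

(* The part of the benchmark [B]'s cost charged to the players served so far:
   item [j] is charged [c j (P j) / q] when the [q]-th last of its owners in [B] leaves. *)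
Definition charged_cost (s : state R n m) :=
  \sum_(i | i \notin st_X s) (v i setT - v i (B i)) +
  alpha * \sum_(j < m) c j (P j) * (harmonic R #|P j| - harmonic R #|P j :&: st_X s|).

Record invariant (s : state R n m) : Prop := Invariant {
  inv_T : forall j,
    st_T s j = st_X s :|: [set i | (i \notin st_X s) && (j \in st_alloc s i)];
  inv_cost : forall j, st_T s j != set0 -> c j (st_T s j) <= #|st_T s j|%:R * st_chi s j;
  inv_alloc : forall i i', i \notin st_X s -> i' \in st_X s ->
    st_alloc s i \subset demand (v i') (st_chi s);
  inv_share : forall j Q, Q != set0 -> Q \subset st_X s ->
    st_chi s j <= alpha * (c j Q / #|Q|%:R);
  inv_account : served_cost s <= charged_cost s }.

Lemma invariant_init : invariant (iacsm_init c).
Proof.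
split=> /=.
- by move=> j; rewrite setTU.
- move=> j T0; rewrite cardsT card_ord mulrC divfK // pnatr_eq0.
  by apply: contraNneq T0 => n0; apply/eqP/setP; case; rewrite n0.
- by move=> i i'; rewrite in_setT.
- by move=> j Q Q0 _; have := c_avg j Q0 (subsetT Q); rewrite cardsT card_ord.
have none_served k : (k \notin [set: 'I_n]) = false by rewrite in_setT.
rewrite /served_cost /charged_cost /= !(eq_bigl _ _ none_served) !big_pred0_eq add0r.
by rewrite big1 ?mulr0 // => j _; rewrite setIT subrr mulr0.
Qed.

Section Step.
Variables (s : state R n m) (i : 'I_n).
Hypothesis inv_s : invariant s.
Hypothesis iX : i \in st_X s.
Hypothesis demand_i_min :
  forall i', i' \in st_X s -> demand (v i) (st_chi s) \subset demand (v i') (st_chi s).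

Local Notation X := (st_X s).
Local Notation chi := (st_chi s).
Local Notation D := (demand (v i) (st_chi s)).
Local Notation s' := (assign v c s i).

Lemma assign_share_ge j : chi j <= st_chi s' j.
Proof. by rewrite /=; case: ifP => // _; rewrite le_max lexx. Qed.

Lemma assign_share_demand j : j \in D -> st_chi s' j = chi j.
Proof. by rewrite /= => ->. Qed.

Lemma alloc_subset_demand k : k \notin X -> st_alloc s k \subset D.
Proof. by move=> kX; apply: (inv_alloc inv_s). Qed.

Lemma assign_T j :
  st_T s' j = st_X s' :|: [set k | (k \notin st_X s') && (j \in st_alloc s' k)].
Proof.
apply/setP => k; rewrite /= (inv_T inv_s).
have [jD|jD] := boolP (j \in D); move: (jD); rewrite inE => jD'.
all: rewrite !(in_setU, in_setD1, inE) ?jD' ?(negbTE jD').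
all: by case: eqVneq => [->|]; rewrite ?iX ?(negbTE jD) //= ?andbT.
Qed.

Lemma assign_cost j :
  st_T s' j != set0 -> c j (st_T s' j) <= #|st_T s' j|%:R * st_chi s' j.
Proof.
have [jD|jD] /= := boolP (j \in D); rewrite ?jD ?(negbTE jD) /=; first exact: inv_cost.
move=> T0; rewrite T0; set T := st_T s j :\ i in T0 *.
have cardT : #|T|%:R != 0 :> R by rewrite pnatr_eq0 cards_eq0.
rewrite -{1}(divfK cardT (c j T)) mulrC ler_wpM2l //.
by rewrite le_max lexx orbT.
Qed.

Lemma assign_alloc k i' : k \notin st_X s' -> i' \in st_X s' ->
  st_alloc s' k \subset demand (v i') (st_chi s').
Proof.
rewrite !in_setD1 negb_and negbK => kX /andP[i'i i'X].
apply/subsetP => j jk; have jD : j \in D.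
  by move: jk; rewrite /=; case: eqVneq kX => [_ _ //|_ /= kX]; apply/subsetP/alloc_subset_demand.
have jDi' := subsetP (demand_i_min i'X) j jD.
exact: (mem_demand_raise (v_sym i') (v_sub i') jDi' assign_share_ge (assign_share_demand jD)).
Qed.

Lemma assign_share j Q : Q != set0 -> Q \subset st_X s' ->
  st_chi s' j <= alpha * (c j Q / #|Q|%:R).
Proof.
move=> Q0 QX; have QX0 : Q \subset X := subset_trans QX (subsetDl _ _).
rewrite /=; case: ifP => _; last exact: (inv_share inv_s).
rewrite ge_max (inv_share inv_s j Q0 QX0) /=; apply: c_avg Q0 (subset_trans QX _).
case: ifP => _; last by apply: setSD; rewrite (inv_T inv_s) subsetUl.
by rewrite (inv_T inv_s) (subset_trans (subsetDl _ _)) ?subsetUl.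
Qed.

(* Item [j] of [B i] costs [chi j <= alpha c_j(P_j) / q], with [q] the number of
   [j]'s owners in [B] still active, which is the increment of [H_q] when [i] leaves. *)
Lemma sum_share_le_harmonic_drop :
  \sum_(j in B i) chi j <=
  alpha * \sum_(j < m) c j (P j) *
    (harmonic R #|P j :&: X| - harmonic R #|P j :&: (X :\ i)|).
Proof.
rewrite big_mkcond mulr_sumr ler_sum // => j _.
have PjX : P j :&: (X :\ i) = (P j :&: X) :\ i by rewrite setIDA.
case: ifPn => jB; last first.
  suff -> : P j :&: (X :\ i) = P j :&: X by rewrite subrr !mulr0.
  by rewrite PjX; apply/setDidPl; rewrite disjoint_sym disjoints1 !inE negb_and jB.
have iPX : i \in P j :&: X by rewrite !inE jB.
have cardPX : #|P j :&: X| = #|P j :&: (X :\ i)|.+1 by rewrite PjX (cardsD1 i) iPX.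
rewrite cardPX harmonicS addrC addKr -cardPX.
have PX0 : P j :&: X != set0 by apply/set0Pn; exists i.
apply: le_trans (inv_share inv_s j PX0 (subsetIr _ _)) _.
by rewrite ler_wpM2l // ler_wpM2r ?invr_ge0 //; apply/c_mono/subsetIl.
Qed.

Lemma assign_account : served_cost s' <= charged_cost s'.
Proof.
have served_old : \sum_(k | k \notin X)
    (v k setT - v k (st_alloc s' k) + \sum_(j in st_alloc s' k) st_chi s' j) =
    \sum_(k | k \notin X) (v k setT - v k (st_alloc s k) + \sum_(j in st_alloc s k) chi j).
  apply: eq_bigr => k kX; have /negbTE/= -> : k != i by apply: contraNneq kX => ->.
  congr (_ + _); apply: eq_bigr => j /(subsetP (alloc_subset_demand kX)).
  exact: assign_share_demand.
have charged_split : \sum_(j < m) c j (P j) *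
      (harmonic R #|P j| - harmonic R #|P j :&: (X :\ i)|) =
    \sum_(j < m) c j (P j) * (harmonic R #|P j| - harmonic R #|P j :&: X|) +
    \sum_(j < m) c j (P j) * (harmonic R #|P j :&: X| - harmonic R #|P j :&: (X :\ i)|).
  by rewrite -big_split; apply: eq_bigr => j _ /=; ring.
have demand_i := demand_max (v_sym i) chi (B i); rewrite /utility in demand_i.
have := inv_account inv_s; have := sum_share_le_harmonic_drop.
rewrite /served_cost /charged_cost /= !sum_notin_setD1 // served_old charged_split eqxx.
have -> : \sum_(j in D) st_chi s' j = \sum_(j in D) chi j.
  by apply: eq_bigr => j; apply: assign_share_demand.
lra.
Qed.

Lemma invariant_assign : invariant s'.
Proof.
split; [exact: assign_T | exact: assign_cost | exact: assign_alloc |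
        exact: assign_share | exact: assign_account].
Qed.

End Step.

Lemma invariant_iter t : (t <= n)%N ->
  invariant (iter t (iacsm_step v c) (iacsm_init c)) /\
  #|st_X (iter t (iacsm_step v c) (iacsm_init c))| = (n - t)%N.
Proof.
elim: t => [|t IHt] lt_tn.
  by split; [exact: invariant_init | rewrite /= cardsT card_ord subn0].
have [inv_t card_t] := IHt (ltnW lt_tn); rewrite iterS.
set s := iter t _ _ in inv_t card_t *.
have X0 : st_X s != set0 by rewrite -card_gt0 card_t subn_gt0.
have [i iX [i_min ->]] := iacsm_step_assign v c X0.
split; first exact: invariant_assign.
by rewrite /= subnS -card_t (cardsD1 i (st_X s)) iX.
Qed.

Hypothesis c_empty : forall j, c j set0 = 0.

Lemma iacsm_cost_le_charged :
  social_cost v c (iacsm_alloc v c) <=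
  \sum_(i < n) (v i setT - v i (B i)) +
  alpha * \sum_(j < m) c j (P j) * harmonic R #|P j|.
Proof.
have [inv_s card_s] := invariant_iter (leqnn n).
rewrite /iacsm_alloc; set s := iter n _ _ in inv_s card_s *.
have X0 : st_X s = set0 by apply/eqP; rewrite -cards_eq0 card_s subnn.
have T_players j : st_T s j = players_of (st_alloc s) j.
  by rewrite (inv_T inv_s) X0 set0U; apply/setP => k; rewrite !inE.
have all_served k : (k \notin st_X s) = true by rewrite X0 inE.
have := inv_account inv_s; rewrite /served_cost /charged_cost !(eq_bigl _ _ all_served).
rewrite X0 big_split /= sum_payments_by_item.
under [X in _ <= _ + alpha * X -> _]eq_bigr => j _ do rewrite setI0 cards0 harmonic0 subr0.
apply: le_trans; rewrite /social_cost addrC lerD // ler_sum // => j _.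
have [T0|T0] := eqVneq (st_T s j) set0; rewrite -T_players.
  by rewrite T0 c_empty cards0 mul0r.
exact: (inv_cost inv_s).
Qed.

End Invariant.

Lemma iacsm_cost_le_harmonic (R : realFieldType) (n m : nat)
    (v : 'I_n -> {set 'I_m} -> R) (c : 'I_m -> {set 'I_n} -> R) (alpha : R)
    (B : 'I_n -> {set 'I_m}) :
  1 <= alpha ->
  (forall i, setfun_nondecreasing (v i)) ->
  (forall i, setfun_symmetric (v i)) ->
  (forall i, setfun_submodular (v i)) ->
  (forall j S, 0 <= c j S) ->
  (forall j, c j set0 = 0) ->
  (forall j, setfun_nondecreasing (c j)) ->
  (forall j, avg_decreasing alpha (c j)) ->
  social_cost v c (iacsm_alloc v c) <= alpha * harmonic R n * social_cost v c B.
Proof.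
move=> alpha_ge1 v_mono v_sym v_sub c_ge0 c_empty c_mono c_avg.
have alpha_ge0 : 0 <= alpha := le_trans ler01 alpha_ge1.
apply: le_trans (iacsm_cost_le_charged B alpha_ge0 v_sym v_sub c_mono c_avg c_empty) _.
set loss := \sum_(i < n) _; set cost := \sum_(j < m) c j (players_of B j).
have loss_ge0 : 0 <= loss by rewrite sumr_ge0 // => i _; rewrite subr_ge0 v_mono ?subsetT.
have harmonic_cost : \sum_(j < m) c j (players_of B j) * harmonic R #|players_of B j|
    <= cost * harmonic R n.
  rewrite mulr_suml ler_sum // => j _.
  by apply: ler_wpM2l; rewrite ?harmonic_le ?card_set_ord_leq.
have loss_le : loss <= alpha * harmonic R n * loss.
  have [n0|n_gt0] := posnP n.
    by rewrite /loss big1 ?mulr0 // => i _; have := ltn_ord i; rewrite {2}n0.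
  have harmonic_ge1 : 1 <= harmonic R n.
    by rewrite -[1]invr1 -[1^-1]add0r -(harmonic0 R) -harmonicS harmonic_le.
  by rewrite ler_peMl // mulr_ege1.
have harmonic_n_ge0 := harmonic_ge0 R n.
rewrite /social_cost -/cost -/loss; nra.
Qed.

Theorem mainTheorem10 (R : realFieldType) (n m : nat)
  (v : 'I_n -> {set 'I_m} -> R) (c : 'I_m -> {set 'I_n} -> R) (alpha : R) :
  1 <= alpha ->
  (forall i S, 0 <= v i S) ->
  (forall i, setfun_nondecreasing (v i)) ->
  (forall i, setfun_symmetric (v i)) ->
  (forall i, setfun_submodular (v i)) ->
  (forall j S, 0 <= c j S) ->
  (forall j, c j set0 = 0) ->
  (forall j, setfun_nondecreasing (c j)) ->
  (forall j, avg_decreasing alpha (c j)) ->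
  forall Aopt : 'I_n -> {set 'I_m},
    (forall A : 'I_n -> {set 'I_m}, social_cost v c Aopt <= social_cost v c A) ->
    social_cost v c (iacsm_alloc v c)
      <= 2 * alpha ^+ 3 * harmonic R n * social_cost v c Aopt.
Proof.
(* The bound holds against every allocation. *)
move=> alpha_ge1 _ v_mono v_sym v_sub c_ge0 c_empty c_mono c_avg Aopt _.
have := iacsm_cost_le_harmonic Aopt alpha_ge1 v_mono v_sym v_sub c_ge0 c_empty c_mono c_avg.
move/le_trans; apply; apply: ler_wpM2r.
- rewrite /social_cost addr_ge0 ?sumr_ge0 // => i _.
  by rewrite subr_ge0 v_mono ?subsetT.
- rewrite ler_wpM2r ?harmonic_ge0 //.
  have alpha2_ge1 : 1 <= alpha ^+ 2 by rewrite exprn_ege1.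
  by rewrite exprS; nra.
Qed.
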